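(* Let $F$ be a graph of diameter $2$, $n=|V(F)|$, and let $l>n$ be an integer. Then $z_{i+1}\ge z_i+C_{l-2}^{n-2}$ for every $i\in\{1,2,\dots,l-1\}$.
   Context: All graphs are simple, finite, undirected. The $F$-degree of a vertex $v$ in $G$ is the number of subgraphs of $G$ (not necessarily induced) isomorphic to $F$ and containing $v$. $A_{2l-1}$ is the graph with vertex set $\{1,\dots,2l-1\}$ in which distinct $i,j$ are adjacent iff $|i-j|\le l-1$. $z_i$ denotes the $F$-degree of vertex $i$ in $A_{2l-1}$. $C_m^k=\frac{m!}{k!(m-k)!}$ for integers $m\ge k\ge0$, and $C_m^k=0$ otherwise. *)

From mathcomp Require Import all_boot.
Set Implicit Arguments. Unset Strict Implicit. Unset Printing Implicit Defensive.

Definition simple_graph (T : finType) (g : rel T) : Prop :=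
  irreflexive g /\ symmetric g.

Definition diameter2 (U : finType) (f : rel U) : Prop :=
  (forall x y : U, x != y -> f x y \/ exists w, f x w && f w y) /\
  (exists x y : U, x != y /\ ~~ f x y).

(* A subgraph of g (not necessarily induced) is a pair (S, E) of a vertex set S
   and a set E of edges of g (2-element sets {x,y} with g x y) contained in S. *)
Definition is_subgraph (T : finType) (g : rel T)
  (p : {set T} * {set {set T}}) : bool :=
  [forall e in p.2, (e \subset p.1) &&
     [exists x : T, exists y : T, g x y && (e == [set x; y])]].

Definition iso_to (U T : finType) (f : rel U)
  (p : {set T} * {set {set T}}) : bool :=
  [exists h : {ffun U -> T},
     [&& injectiveb h, [set h x | x in U] == p.1 &
         [forall x, forall y, f x y == ([set h x; h y] \in p.2)]]].

Definition Fdeg (U T : finType) (f : rel U) (g : rel T) (v : T) : nat :=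
  #|[set p : {set T} * {set {set T}} |
       [&& is_subgraph g p, iso_to f p & v \in p.1]]|.

(* A_{2l-1}: vertices 1..2l-1, represented by the ordinals 0..2l-2
   (paper vertex i is the ordinal of value i-1); distinct i, j adjacent
   iff |i - j| <= l - 1. *)
Definition Agraph (l : nat) : rel 'I_(2 * l - 1) :=
  fun i j => (i != j) && (i - j <= l - 1) && (j - i <= l - 1).
Arguments Agraph : clear implicits.

From mathcomp Require Import all_boot fingroup perm zify.
Set Implicit Arguments. Unset Strict Implicit. Unset Printing Implicit Defensive.

(* Let c = a + l, the vertex l - 1 steps beyond b = a + 1; it is adjacent to b but not to a.
   Copies of F through a are mapped injectively to copies through b: a copy already
   containing b is kept, any other one is relabelled by the transposition (a b), which maps
   its edges to edges because every neighbour of a other than b is a neighbour of b.  No image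
   avoids a while using the edge bc, since relabelling back would turn bc into the non-edge
   ac.  Such copies are plentiful: b, c and the l - 2 vertices between them form a clique,
   so sending an edge of F onto bc and the other n - 2 vertices onto any (n - 2)-subset of
   the interior gives C(l - 2, n - 2) distinct copies. *)

Local Notation graph_pair T := ({set T} * {set {set T}})%type.

Lemma set2_inj (T : finType) (x y x' y' : T) :
  [set x; y] = [set x'; y'] -> (x = x' /\ y = y') \/ (x = y' /\ y = x').
Proof.
move=> E.
have /set2P[] : x \in [set x'; y'] by rewrite -E set21.
all: have /set2P[] : y \in [set x'; y'] by rewrite -E set22.
all: have /set2P[] : x' \in [set x; y] by rewrite E set21.
all: have /set2P[] : y' \in [set x; y] by rewrite E set22.
all: move=> *; subst; by [left | right].
Qed.

Lemma card_ord_range N m k : k <= N -> #|[set z : 'I_N | m <= z < k]| = k - m.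
Proof.
move=> kN; rewrite -sum1dep_card -(big_mkord (fun i => m <= i < k) (fun _ => 1)).
rewrite -(big_nat_widen _ _ _ _ _ kN) /=.
under eq_bigl do rewrite -[m <= _]andTb.
by rewrite -(big_nat_widenl _ _ _ _ _ (leq0n m)) sum_nat_const_nat muln1.
Qed.

Lemma exists_bij_on (U T : finType) (A : {set U}) (B : {set T}) (t : T) :
  #|A| = #|B| -> exists2 h : U -> T, {in A &, injective h} & h @: A = B.
Proof.
move=> AB; pose h x := nth t (enum B) (index x (enum A)).
have idx x : x \in A -> index x (enum A) < size (enum B).
  by move=> xA; rewrite -cardE -AB cardE index_mem mem_enum.
have hB x : x \in A -> h x \in B.
  by move=> xA; rewrite -mem_enum; apply/mem_nth/idx.
have hinj : {in A &, injective h}.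
  move=> x y xA yA /eqP; rewrite nth_uniq ?enum_uniq ?idx //.
  by move/eqP/(congr1 (nth x (enum A))); rewrite !nth_index ?mem_enum.
exists h => //; apply/eqP; rewrite eqEcard card_in_imset // AB leqnn andbT.
by apply/subsetP => _ /imsetP[x xA ->]; apply: hB.
Qed.

Lemma exists_inj_extension (U T : finType) (x0 w : U) (t0 t1 : T) (X : {set T}) :
  x0 != w -> t0 != t1 -> t0 \notin X -> t1 \notin X -> #|X| = #|U| - 2 ->
  exists2 h : U -> T, injective h &
    [/\ h x0 = t0, h w = t1 & [set h x | x in U] = t0 |: (t1 |: X)].
Proof.
move=> x0w t01 t0X t1X cX.
have cUX : #|U| = #|X| + 2.
  by have := cardsC [set x0; w]; rewrite cards2 x0w; lia.
have [h0 _ h0X] : exists2 h0 : U -> T,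
    {in ~: [set x0; w] &, injective h0} & h0 @: (~: [set x0; w]) = X.
  by apply: (exists_bij_on t0); have := cardsC [set x0; w]; rewrite cards2 x0w; lia.
pose h x := if x == x0 then t0 else if x == w then t1 else h0 x.
have hx0 : h x0 = t0 by rewrite /h eqxx.
have hw : h w = t1 by rewrite /h eq_sym (negbTE x0w) eqxx.
have himg : [set h x | x in U] = t0 |: (t1 |: X).
  apply/setP => z; apply/imsetP/idP => [[x _ ->] | ].
    rewrite /h; case: eqP => [_ | /eqP xx0]; first by rewrite setU11.
    case: eqP => [_ | /eqP xw]; first by rewrite setU1r ?setU11.
    by rewrite !setU1r // -h0X imset_f // !inE negb_or xx0.
  case/setU1P => [-> | /setU1P[-> | ]]; [by exists x0 | by exists w | ].
  rewrite -h0X => /imsetP[x]; rewrite !inE negb_or => /andP[xx0 xw] ->.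
  by exists x => //; rewrite /h (negbTE xx0) (negbTE xw).
have /imset_injP hinj : #|[set h x | x in U]| == #|U|.
  by rewrite himg !cardsU1 !inE negb_or t01 t0X t1X cUX /= add1n addn2.
by exists h => // x y; apply: hinj.
Qed.

Section Copies.
Variables (U T : finType) (f : rel U) (g : rel T).

Lemma is_subgraphP (p : graph_pair T) :
  reflect (forall e, e \in p.2 -> e \subset p.1 /\ exists x y, g x y /\ e = [set x; y])
          (is_subgraph g p).
Proof.
apply: (iffP forallP) => H e.
  move=> ep; case/andP: (implyP (H e) ep) => sub.
  case/existsP=> x /existsP[y /andP[gxy /eqP exy]].
  by split=> //; exists x, y.
apply/implyP => ep; have [-> [x [y [gxy exy]]]] := H e ep.
by apply/existsP; exists x; apply/existsP; exists y; rewrite gxy exy eqxx.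
Qed.

Lemma iso_toP (p : graph_pair T) :
  reflect (exists h : U -> T,
             [/\ injective h, [set h x | x in U] = p.1 &
                 forall x y, f x y = ([set h x; h y] \in p.2)])
          (iso_to f p).
Proof.
apply: (iffP existsP) => [[h /and3P[/injectiveP hinj /eqP himg /forallP hE]] |
                          [h [hinj himg hE]]].
  by exists h; split=> // x y; apply/eqP; move/forallP: (hE x).
exists [ffun x => h x]; apply/and3P; split.
- by apply/injectiveP => x y; rewrite !ffunE => /hinj.
- by rewrite -himg; apply/eqP/eq_imset => x; rewrite ffunE.
- by apply/forallP => x; apply/forallP => y; rewrite !ffunE hE.
Qed.

Lemma subgraph_edge_sub (p : graph_pair T) e :
  is_subgraph g p -> e \in p.2 -> e \subset p.1.
Proof. by move=> /is_subgraphP pg /pg[]. Qed.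

Lemma subgraph_edge (p : graph_pair T) x y :
  symmetric g -> is_subgraph g p -> [set x; y] \in p.2 -> g x y.
Proof.
move=> gsym /is_subgraphP sg /sg[_ [x' [y' [gxy /set2_inj[] [-> ->]]]]] //.
by rewrite gsym.
Qed.

Definition relabel (s : T -> T) (p : graph_pair T) : graph_pair T :=
  (s @: p.1, [set s @: e | e : {set T} in p.2]).

Lemma relabelK s : involutive s -> involutive (relabel s).
Proof.
have imsetK (A : {set T}) : involutive s -> s @: (s @: A) = A.
  by move=> sK; rewrite -imset_comp (eq_imset _ sK) imset_id.
move=> sK [S E]; rewrite /relabel /= imsetK //; congr pair.
by rewrite -imset_comp (eq_imset _ (fun e => imsetK e sK)) imset_id.
Qed.

Lemma relabel_subgraph s (p : graph_pair T) :
  {in p.1 &, forall x y, g x y -> g (s x) (s y)} ->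
  is_subgraph g p -> is_subgraph g (relabel s p).
Proof.
move=> sg /is_subgraphP pg; apply/is_subgraphP => _ /imsetP[e ep ->].
have [esub [x [y [gxy exy]]]] := pg e ep.
split; first exact: imsetS.
have [xp yp] : x \in p.1 /\ y \in p.1.
  by split; apply: (subsetP esub); rewrite exy !inE eqxx ?orbT.
by exists (s x), (s y); rewrite exy imsetU1 imset_set1 sg.
Qed.

Lemma relabel_iso s (p : graph_pair T) :
  injective s -> iso_to f p -> iso_to f (relabel s p).
Proof.
move=> sinj /iso_toP[h [hinj himg hE]]; apply/iso_toP; exists (s \o h); split.
- exact: inj_comp.
- by rewrite /= -himg -imset_comp.
- move=> x y; rewrite hE /= -(mem_imset _ _ (imset_inj sinj)).
  by rewrite imsetU1 imset_set1.
Qed.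

Definition image_copy (h : U -> T) : graph_pair T :=
  ([set h x | x in U], [set e | [exists x, exists y, f x y && (e == [set h x; h y])]]).

Lemma image_copy_subgraph h :
  (forall x y, f x y -> g (h x) (h y)) -> is_subgraph g (image_copy h).
Proof.
move=> hom; apply/is_subgraphP => e.
rewrite inE => /existsP[x /existsP[y /andP[fxy /eqP ->]]].
split; last by exists (h x), (h y); rewrite hom.
by apply/subsetP => _ /set2P[] ->; apply: imset_f.
Qed.

Lemma image_copy_iso h : symmetric f -> injective h -> iso_to f (image_copy h).
Proof.
move=> fsym hinj; apply/iso_toP; exists h; split=> // x y; rewrite inE.
apply/idP/existsP => [fxy | [x' /existsP[y' /andP[fxy /eqP]]]].
  by exists x; apply/existsP; exists y; rewrite fxy eqxx.
by case/set2_inj => [[/hinj -> /hinj ->] | [/hinj -> /hinj ->]]; rewrite // fsym.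
Qed.

End Copies.

Section Transfer.
Variables (U T : finType) (f : rel U) (g : rel T) (a b c : T).
Hypotheses (girr : irreflexive g) (gsym : symmetric g).
Hypothesis gab_nbr : forall z, z != b -> g a z -> g b z.
Hypothesis gac : ~~ g a c.

Let s := tperm a b.

Definition copies_at (v : T) :=
  [set p | [&& is_subgraph g p, iso_to f p & v \in p.1]].

Definition transfer (p : graph_pair T) :=
  if b \in p.1 then p else relabel s p.

Lemma swap_homo (p : graph_pair T) :
  b \notin p.1 -> {in p.1 &, forall x y, g x y -> g (s x) (s y)}.
Proof.
move=> bp x y xp yp.
have nb z : z \in p.1 -> z != b by move=> zp; apply: contraNneq bp => <-.
have sfix z : z \in p.1 -> z != a -> s z = z.
  by move=> zp za; rewrite /s tpermD // eq_sym ?nb.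
case: (eqVneq x a) => [-> | xa]; case: (eqVneq y a) => [-> | ya].
- by rewrite girr.
- by rewrite /s tpermL sfix //; apply: gab_nbr (nb y yp).
- by rewrite /s tpermL sfix // !(gsym _ b) => gxa; apply: gab_nbr (nb x xp) _; rewrite gsym.
- by rewrite !sfix.
Qed.

Lemma transfer_copies p : p \in copies_at a -> transfer p \in copies_at b.
Proof.
rewrite !inE /transfer => /and3P[pg piso ap].
case: ifP => bp; first by rewrite pg piso bp.
apply/and3P; split.
- by apply: relabel_subgraph pg; apply: swap_homo; rewrite bp.
- by apply: relabel_iso piso; exact: perm_inj.
- by rewrite -(tpermL a b) imset_f.
Qed.

Lemma mem_relabel_swap (p : graph_pair T) :
  (a \in (relabel s p).1) = (b \in p.1).
Proof. by rewrite -{1}(tpermR a b) mem_imset //; exact: perm_inj. Qed.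

Lemma transfer_inj : {in copies_at a &, injective transfer}.
Proof.
move=> p p'; rewrite !inE /transfer => /and3P[_ _ ap] /and3P[_ _ ap'].
case: ifP => bp; case: ifP => bp' // E.
- by move: ap; rewrite E mem_relabel_swap bp'.
- by move: ap'; rewrite -E mem_relabel_swap bp.
- exact: (inv_inj (relabelK (tpermK a b))).
Qed.

Lemma transfer_avoids q :
  is_subgraph g q -> a \notin q.1 -> [set b; c] \in q.2 ->
  q \notin transfer @: copies_at a.
Proof.
move=> qg aq bcq; apply/imsetP => -[p]; rewrite inE /transfer => /and3P[pg _ ap].
case: ifP => bp qE; first by rewrite qE ap in aq.
have /subsetP bcq1 := subgraph_edge_sub qg bcq.
have ca : c != a by apply: contraNneq aq => <-; apply: bcq1; rewrite set22.
have cb : c != b by apply: contraTneq (subgraph_edge gsym qg bcq) => ->; rewrite girr.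
have : [set a; c] \in p.2.
  rewrite -[p](relabelK (tpermK a b)) -qE /=.
  have -> : [set a; c] = s @: [set b; c].
    by rewrite imsetU1 imset_set1 /s tpermR tpermD // eq_sym.
  exact: imset_f.
by move/(subgraph_edge gsym pg); rewrite (negbTE gac).
Qed.

Lemma Fdeg_transfer_le (K : {set graph_pair T}) :
  (forall q, q \in K ->
     [&& is_subgraph g q, iso_to f q, a \notin q.1 & [set b; c] \in q.2]) ->
  Fdeg f g a + #|K| <= Fdeg f g b.
Proof.
move=> HK; rewrite -[Fdeg f g a](card_in_imset transfer_inj).
have disj : (transfer @: copies_at a) :&: K = set0.
  apply/setP => q; rewrite !inE; apply/negP => /andP[qt /HK /and4P[qg _ aq bcq]].
  by move: qt; rewrite (negbTE (transfer_avoids qg aq bcq)).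
rewrite -cardsUI disj cards0 addn0; apply: subset_leq_card.
rewrite subUset; apply/andP; split; apply/subsetP => q.
  by case/imsetP => p pa ->; apply: transfer_copies.
case/HK/and4P => qg qiso _ bcq; rewrite inE qg qiso /=.
by apply: (subsetP (subgraph_edge_sub qg bcq)); rewrite set21.
Qed.

End Transfer.

Lemma clique_copies_card (U T : finType) (f : rel U) (g : rel T)
    (x0 w : U) (t0 t1 : T) (I : {set T}) :
  simple_graph f -> f x0 w -> t0 != t1 -> t0 \notin I -> t1 \notin I ->
  {in t0 |: (t1 |: I) &, forall x y, x != y -> g x y} ->
  'C(#|I|, #|U| - 2) <=
    #|[set q | [&& is_subgraph g q, iso_to f q,
                   q.1 \subset t0 |: (t1 |: I) & [set t0; t1] \in q.2]]|.
Proof.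
move=> [firr fsym] fx0w t01 t0I t1I clique.
have x0w : x0 != w by apply: contraTneq fx0w => ->; rewrite firr.
rewrite -cards_draws; set K := [set q | _].
apply: leq_trans (leq_imset_card (fun q => q.1 :\: [set t0; t1]) K).
apply/subset_leq_card/subsetP => X; rewrite inE => /andP[XI /eqP cX].
have [t0X t1X] : t0 \notin X /\ t1 \notin X.
  by split; apply/negP => /(subsetP XI); apply/negP.
have [h hinj [hx0 hw himg]] := exists_inj_extension x0w t01 t0X t1X cX.
have hsub : t0 |: (t1 |: X) \subset t0 |: (t1 |: I) by rewrite !setUS.
apply/imsetP; exists (image_copy f h); last first.
  rewrite /= himg; apply/setP => z; rewrite !inE.
  by case: eqVneq => [-> | _]; case: eqVneq => [-> | _];
    rewrite ?(negbTE t0X) ?(negbTE t1X).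
rewrite inE; apply/and4P; split.
- apply: image_copy_subgraph => x y fxy.
  have hI z : h z \in t0 |: (t1 |: I) by apply: (subsetP hsub); rewrite -himg imset_f.
  apply: clique; rewrite ?hI // (inj_eq hinj).
  by apply: contraTneq fxy => ->; rewrite firr.
- exact: image_copy_iso.
- by rewrite /= himg.
- rewrite inE; apply/existsP; exists x0; apply/existsP; exists w.
  by rewrite fx0w -hx0 -hw eqxx.
Qed.

Section Agraph.
Variable l : nat.
Local Notation vertex := 'I_(2 * l - 1).

Lemma Agraph_simple : simple_graph (Agraph l).
Proof.
split=> [i | i j]; first by rewrite /Agraph eqxx.
by rewrite /Agraph eq_sym -!andbA (andbC (j - i <= _)).
Qed.

Lemma Agraph_window k (x y : vertex) :
  x != y -> k <= x <= k + (l - 1) -> k <= y <= k + (l - 1) -> Agraph l x y.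
Proof. rewrite /Agraph -val_eqE /=; lia. Qed.

Lemma Agraph_succ_nbr (a b z : vertex) :
  a < l - 1 -> val b = val a + 1 -> z != b -> Agraph l a z -> Agraph l b z.
Proof. rewrite /Agraph -!val_eqE /=; lia. Qed.

Lemma Agraph_far (a c : vertex) : val c = val a + l -> ~~ Agraph l a c.
Proof. rewrite /Agraph -!val_eqE /=; lia. Qed.

End Agraph.

Theorem lemma2 (U : finType) (f : rel U) (l : nat) :
  simple_graph f -> diameter2 f -> #|U| < l ->
  forall a b : 'I_(2 * l - 1), val a < l - 1 -> val b = val a + 1 ->
    Fdeg f (Agraph l) a + 'C(l - 2, #|U| - 2) <= Fdeg f (Agraph l) b.
Proof.
move=> fsimple [adj2 [x0 [y0 [x0y0 nfx0y0]]]] Ul a b /= al bE.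
have [w fx0w] : exists w, f x0 w.
  case: (adj2 x0 y0 x0y0) => [fxy | [w /andP[fx0w _]]]; last by exists w.
  by rewrite fxy in nfx0y0.
have [Airr Asym] := Agraph_simple l.
have cl : a + l < 2 * l - 1 by lia.
pose c : 'I_(2 * l - 1) := Ordinal cl.
pose I := [set z : 'I_(2 * l - 1) | b < z < c].
have cardI : #|I| = l - 2 by rewrite card_ord_range /= ?bE; lia.
have bc : b != c by rewrite -val_eqE /= bE; lia.
have [bI cI] : b \notin I /\ c \notin I by rewrite !inE !ltnn andbF.
set K := [set q | [&& is_subgraph (Agraph l) q, iso_to f q,
                      q.1 \subset b |: (c |: I) & [set b; c] \in q.2]].
have K_large : 'C(l - 2, #|U| - 2) <= #|K|.
  have window z : z \in b |: (c |: I) -> b <= z <= b + (l - 1).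
    by rewrite !inE -!val_eqE /= bE; lia.
  rewrite -cardI; apply: clique_copies_card fsimple fx0w bc bI cI _.
  by move=> x y xI yI xy; apply: Agraph_window xy (window x xI) (window y yI).
apply: leq_trans (leq_add (leqnn _) K_large) _.
apply: (Fdeg_transfer_le (c := c) Airr Asym).
- by move=> z; apply: Agraph_succ_nbr.
- exact: Agraph_far.
- move=> q; rewrite inE => /and4P[-> -> qsub ->]; rewrite andbT /=.
  apply: contraTN qsub => aq; apply/subsetPn; exists a => //.
  by rewrite !inE -!val_eqE /= bE; lia.
Qed.
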